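(* Let $W$ be a finite Weyl group, $w\in W$, and $U\subseteq V$ a subspace. If $\mathcal{I}(w)$ is supersolvable, then $\mathcal{I}(\mathrm{fl}_U(w))$ is supersolvable.
   Context: $W$ is a finite Weyl group with root system $R\subset V$, positive roots $R^+$, negative roots $R^-$; $I(w)=\{\alpha\in R^+:w^{-1}\alpha\in R^-\}$, $\mathcal{I}(w)$ the arrangement of hyperplanes $\ker\alpha$, $\alpha\in I(w)$. $R_U=R\cap U$ is a root system with Weyl group $W_U$; $\mathrm{fl}_U(w)\in W_U$ is the unique element whose inversion set (w.r.t. positive roots $R^+\cap U$) is $I(w)\cap U$. A central arrangement is supersolvable if its intersection lattice (flats ordered by reverse inclusion) has a maximal chain of modular elements, where a flat $X$ is modular if $\mathrm{rk}(X)+\mathrm{rk}(Y)=\mathrm{rk}(X\wedge Y)+\mathrm{rk}(X\vee Y)$ for all flats $Y$. *)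

From HB Require Import structures.
From mathcomp Require Import all_boot all_order all_algebra.
Set Implicit Arguments. Unset Strict Implicit. Unset Printing Implicit Defensive.
Import Order.TTheory GRing.Theory Num.Theory.
Local Open Scope ring_scope.

Section Weyl.
Variables (R : realFieldType) (n : nat).
Local Notation vec := 'rV[R]_n.

Definition dot (u v : vec) : R := (u *m v^T) 0 0.

(* reflection s_a, acting on row vectors on the right: v *m refl a *)
Definition refl (a : vec) : 'M[R]_n :=
  1%:M - (2 / dot a a) *: (a^T *m a).

Definition rowsmx (s : seq vec) : 'M[R]_(size s, n) := \matrix_(i < size s) s`_i.

(* reduced crystallographic root system in V (spanning V) *)
Definition root_system (Phi : seq vec) : Prop :=
  [/\ 0 \notin Phi,
      (forall a b, a \in Phi -> b \in Phi -> b *m refl a \in Phi),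
      (forall a b, a \in Phi -> b \in Phi ->
          exists z : int, 2 * dot b a / dot a a = z%:~R),
      (forall a (k : R), a \in Phi -> k *: a \in Phi -> k = 1 \/ k = -1)
    & \rank (rowsmx Phi) = n].

Definition in_weyl (Phi : seq vec) (w : 'M[R]_n) : Prop :=
  exists s : seq vec, all (fun a => a \in Phi) s /\
    w = foldr (fun a m => refl a *m m) 1%:M s.

Definition regular (Phi : seq vec) (c : vec) : Prop :=
  forall a, a \in Phi -> dot a c != 0.
Definition pos_root (Phi : seq vec) (c : vec) (a : vec) : bool :=
  (a \in Phi) && (0 < dot a c).
Definition neg_root (Phi : seq vec) (c : vec) (a : vec) : bool :=
  (a \in Phi) && (dot a c < 0).

Definition inv_set (Phi : seq vec) (c : vec) (w : 'M[R]_n) : seq vec :=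
  [seq a <- Phi | pos_root Phi c a && neg_root Phi c (a *m invmx w)].

(* R_U = R cap U, U given as the row space of a matrix *)
Definition restr (Phi : seq vec) (U : 'M[R]_n) : seq vec :=
  [seq a <- Phi | (a <= U)%MS].

(* ---- hyperplane arrangements {ker a : a in A} and their intersection lattice *)
Definition colsmx (s : seq vec) : 'M[R]_(n, size s) := (rowsmx s)^T.
(* the flat  cap_{a in s} ker a  (as a row space) *)
Definition flatmx (s : seq vec) : 'M[R]_n := kermx (colsmx s).

Definition is_flat (A : seq vec) (X : 'M[R]_n) : Prop :=
  exists s : seq vec, {subset s <= A} /\ (X == flatmx s)%MS.

(* lattice order: reverse inclusion *)
Definition fle (X Y : 'M[R]_n) : bool := (Y <= X)%MS.
Definition flt (X Y : 'M[R]_n) : bool := fle X Y && ~~ fle Y X.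
(* rank of a flat = codimension *)
Definition frk (X : 'M[R]_n) : nat := (n - \rank X)%N.

Definition is_meet (A : seq vec) (Z X Y : 'M[R]_n) : Prop :=
  [/\ is_flat A Z, fle Z X, fle Z Y &
      forall Z', is_flat A Z' -> fle Z' X -> fle Z' Y -> fle Z' Z].
Definition is_join (A : seq vec) (Z X Y : 'M[R]_n) : Prop :=
  [/\ is_flat A Z, fle X Z, fle Y Z &
      forall Z', is_flat A Z' -> fle X Z' -> fle Y Z' -> fle Z Z'].

Definition modular (A : seq vec) (X : 'M[R]_n) : Prop :=
  is_flat A X /\
  forall Y Z Z', is_flat A Y -> is_meet A Z X Y -> is_join A Z' X Y ->
    (frk X + frk Y = frk Z + frk Z')%N.

Definition covers (A : seq vec) (X Y : 'M[R]_n) : Prop :=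
  flt X Y /\ ~ (exists Z, is_flat A Z /\ flt X Z /\ flt Z Y).

(* maximal chain V = X_0 < X_1 < ... < X_k = center of modular flats *)
Definition supersolvable (A : seq vec) : Prop :=
  exists (k : nat) (X : nat -> 'M[R]_n),
    [/\ (X 0%N == flatmx [::])%MS, (X k == flatmx A)%MS,
        (forall i, (i < k)%N -> covers A (X i) (X i.+1))
      & (forall i, (i <= k)%N -> modular A (X i))].

End Weyl.

From HB Require Import structures.
From mathcomp Require Import all_boot all_order all_algebra.
From mathcomp Require Import zify.
Set Implicit Arguments. Unset Strict Implicit. Unset Printing Implicit Defensive.
Import Order.TTheory GRing.Theory Num.Theory.
Local Open Scope ring_scope.

(* By hypothesis the inversion set of u = fl_U(w) is I(w) ∩ U, so the theorem
   is an instance of a fact about arbitrary central arrangements: if the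
   arrangement A is supersolvable, then so is A_U = {a ∈ A | a ∈ U}.  The root
   system and the Weyl group play no further role.

   Let Y0 be the flat cut out by A_U.  Every a ∈ A vanishing on Y0 lies in the
   span of A_U, hence in U, so A_U is the localization of A at Y0: its flats
   are exactly the flats of A containing Y0.  A flat X is modular iff X + T is
   again a flat for every flat T (meets in the intersection lattice are sums
   exactly when the rank formula holds).  Hence for a modular flat X of A, the
   flat X + Y0 is modular in A_U.  Given a maximal modular chain X_0 > ... > X_k
   of A, the spaces X_i + Y0 run from V to Y0 with rank drops of at most one;
   deleting repetitions yields a maximal modular chain of A_U. *)

Section Flats.
Variables (R : realFieldType) (n : nat).
Local Notation vec := 'rV[R]_n.
Implicit Types (s t A : seq vec) (X Y Z T : 'M[R]_n).

Lemma sub_flatmxP m (S : 'M[R]_(m, n)) s :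
  reflect (forall a, a \in s -> S *m a^T = 0) (S <= flatmx s)%MS.
Proof.
apply: (iffP sub_kermxP) => [SK a aS | Sa].
  apply/matrixP => i k; rewrite [k]ord1.
  transitivity ((S *m colsmx s) i (Ordinal (etrans (index_mem a s) aS))).
    by rewrite !mxE; apply: eq_bigr => l _; rewrite !mxE /= nth_index.
  by rewrite SK !mxE.
apply/matrixP => i j; transitivity ((S *m (s`_j)^T) i 0).
  by rewrite !mxE; apply: eq_bigr => l _; rewrite !mxE.
by rewrite Sa ?mxE // mem_nth.
Qed.

Lemma vanish_sub m1 m2 (S1 : 'M[R]_(m1, n)) (S2 : 'M[R]_(m2, n)) (a : vec) :
  (S1 <= S2)%MS -> S2 *m a^T = 0 -> S1 *m a^T = 0.
Proof. by case/submxP => D -> S2a; rewrite -mulmxA S2a mulmx0. Qed.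

Lemma flatmx_vanish s a : a \in s -> flatmx s *m a^T = 0.
Proof. exact/sub_flatmxP. Qed.

Lemma flatmx_subset s t : {subset s <= t} -> (flatmx t <= flatmx s)%MS.
Proof. by move=> st; apply/sub_flatmxP => a /st; apply: flatmx_vanish. Qed.

Lemma flatmx_cat s t : (flatmx (s ++ t) == flatmx s :&: flatmx t)%MS.
Proof.
apply/andP; split.
  by rewrite sub_capmx !flatmx_subset // => a ai; rewrite mem_cat ai ?orbT.
apply/sub_flatmxP => a; rewrite mem_cat => /orP[] ai.
  exact: vanish_sub (capmxSl _ _) (flatmx_vanish ai).
exact: vanish_sub (capmxSr _ _) (flatmx_vanish ai).
Qed.

Lemma flatmx_annihilator s (a : vec) :
  flatmx s *m a^T = 0 -> (a <= rowsmx s)%MS.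
Proof.
move=> Ka; pose K := kermx (flatmx s)^T.
have aK : (a <= K)%MS.
  by apply/sub_kermxP; rewrite -[a]trmxK -trmx_mul Ka trmx0.
have sK : (rowsmx s <= K)%MS.
  apply/sub_kermxP; rewrite -[rowsmx s]trmxK -trmx_mul.
  by rewrite [_ *m _](mulmx_ker (colsmx s)) trmx0.
have rK : (\rank K <= \rank (rowsmx s))%N.
  rewrite mxrank_ker mxrank_tr /flatmx mxrank_ker /colsmx mxrank_tr.
  have := rank_leq_col (rowsmx s); lia.
have /esym Ks := geq_leqif (mxrank_leqif_sup sK).
by rewrite rK in Ks; apply: submx_trans aK Ks.
Qed.

Lemma is_flat_eq A X Y : is_flat A X -> (X == Y)%MS -> is_flat A Y.
Proof.
move=> [s [sA Xs]] XY; exists s; split => //; apply/eqmxP.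
exact: eqmx_trans (eqmx_sym (eqmxP XY)) (eqmxP Xs).
Qed.

Lemma is_flat_cap A X T : is_flat A X -> is_flat A T -> is_flat A (X :&: T)%MS.
Proof.
move=> [s [sA /andP[Xs sX]]] [t [tA /andP[Tt tT]]]; exists (s ++ t); split.
  by move=> a; rewrite mem_cat => /orP[] /[dup] ?; [move/sA | move/tA].
apply/eqmxP; apply: eqmx_trans (eqmx_sym (eqmxP (flatmx_cat s t))).
by apply/eqmxP; rewrite !capmxS.
Qed.

Definition closure A (S : 'M[R]_n) : 'M[R]_n :=
  flatmx [seq a <- A | S *m a^T == 0].

Lemma closure_sub A S : (S <= closure A S)%MS.
Proof. by apply/sub_flatmxP => a; rewrite mem_filter => /andP[/eqP]. Qed.

Lemma closure_meet A X T : is_meet A (closure A (X + T)%MS) X T.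
Proof.
split; rewrite /fle.
- exists [seq a <- A | (X + T)%MS *m a^T == 0]; split; last exact/eqmxP.
  by move=> a; rewrite mem_filter => /andP[].
- exact: submx_trans (addsmxSl _ _) (closure_sub _ _).
- exact: submx_trans (addsmxSr _ _) (closure_sub _ _).
move=> Z [s [sA /andP[Zs sZ]]] XZ TZ; apply: submx_trans sZ.
apply: flatmx_subset => a aS; rewrite mem_filter sA // andbT; apply/eqP.
apply: vanish_sub (flatmx_vanish aS).
by rewrite addsmx_sub (submx_trans XZ Zs) (submx_trans TZ Zs).
Qed.

Lemma cap_join A X T : is_flat A X -> is_flat A T -> is_join A (X :&: T)%MS X T.
Proof.
move=> fX fT; split; rewrite /fle ?capmxSl ?capmxSr //; first exact: is_flat_cap.
by move=> Z _ XZ TZ; rewrite sub_capmx XZ TZ.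
Qed.

(* A modular flat X has X + T a flat for every flat T: by the rank formula the
   meet (the closure of X + T) has the same rank as X + T. *)
Lemma modular_sum A X T : modular A X -> is_flat A T -> is_flat A (X + T)%MS.
Proof.
move=> [fX Xmod] fT; have [fcl clX clT _] := closure_meet A X T.
have XTcl : (X + T <= closure A (X + T)%MS)%MS by rewrite addsmx_sub; apply/andP.
have rk_cl : (\rank (closure A (X + T)%MS) <= \rank (X + T)%MS)%N.
  have := Xmod _ _ _ fT (closure_meet A X T) (cap_join fX fT).
  have := mxrank_sum_cap X T; rewrite /frk.
  have := rank_leq_col X; have := rank_leq_col T.
  have := rank_leq_col (X :&: T)%MS.
  have := rank_leq_col (closure A (X + T)%MS); lia.
apply: is_flat_eq fcl _; rewrite XTcl andbT.
by rewrite -(geq_leqif (mxrank_leqif_sup XTcl)).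
Qed.

Lemma sum_modular A X : is_flat A X ->
  (forall T, is_flat A T -> is_flat A (X + T)%MS) -> modular A X.
Proof.
move=> fX XT; split => // T Z Z' fT [_ ZX ZT Zmax] [_ XZ' TZ' Z'min].
rewrite /fle in ZX ZT XZ' TZ'.
have rZ : \rank Z = \rank (X + T)%MS.
  apply/eqP; rewrite eqn_leq !mxrankS ?addsmx_sub ?ZX ?ZT //.
  exact: Zmax (XT _ fT) (addsmxSl _ _) (addsmxSr _ _).
have rZ' : \rank Z' = \rank (X :&: T)%MS.
  apply/eqP; rewrite eqn_leq !mxrankS ?sub_capmx ?XZ' ?TZ' //.
  exact: Z'min (is_flat_cap fX fT) (capmxSl _ _) (capmxSr _ _).
have := mxrank_sum_cap X T; rewrite /frk rZ rZ'.
have := rank_leq_col X; have := rank_leq_col T.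
have := rank_leq_col (X :&: T)%MS; have := rank_leq_col (X + T)%MS; lia.
Qed.

Lemma rank_cap_hyperplane X (a : vec) :
  (\rank X <= (\rank (X :&: flatmx [:: a])%MS).+1)%N.
Proof.
have := mxrank_sum_cap X (flatmx [:: a]).
have := rank_leq_col (X + flatmx [:: a])%MS.
rewrite /flatmx mxrank_ker; have := rank_leq_col (colsmx [:: a]); rewrite /=; lia.
Qed.

Lemma cover_rank A X Y : is_flat A X -> is_flat A Y -> covers A X Y ->
  \rank X = (\rank Y).+1.
Proof.
move=> fX [s [sA /andP[Ys sY]]] [/andP[YX XnY] nobetween]; rewrite /fle in YX XnY.
have /hasP[a aS Xa] : has (fun a => X *m a^T != 0) s.
  apply/negPn/negP => /hasPn Xs; apply: (negP XnY); apply: submx_trans sY.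
  by apply/sub_flatmxP => a /Xs /negPn /eqP.
pose Z := (X :&: flatmx [:: a])%MS.
have fZ : is_flat A Z.
  apply: is_flat_cap fX _; exists [:: a]; split; last exact/eqmxP.
  by move=> b; rewrite inE => /eqP ->; apply: sA.
have YZ : (Y <= Z)%MS.
  rewrite sub_capmx YX (submx_trans Ys) // flatmx_subset // => b.
  by rewrite inE => /eqP ->.
have XnZ : ~~ (X <= Z)%MS.
  rewrite sub_capmx submx_refl; apply/negP => /sub_flatmxP Xa0.
  by move: Xa; rewrite Xa0 ?inE ?eqxx.
have ZY : (Z <= Y)%MS.
  apply/negPn/negP => ZnY; apply: nobetween; exists Z.
  by rewrite /flt /fle capmxSl YZ.
have rZY : \rank Z = \rank Y by apply/eqP; rewrite eqn_leq !mxrankS.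
have rZX : (\rank Z < \rank X)%N.
  by rewrite (ltn_leqif (mxrank_leqif_sup (capmxSl _ _))).
have := rank_cap_hyperplane X a; rewrite -/Z; lia.
Qed.

Lemma rank_step_covers A X Y :
  (Y <= X)%MS -> \rank X = (\rank Y).+1 -> covers A X Y.
Proof.
move=> YX rXY; split.
  by rewrite /flt /fle YX; apply/negP => /mxrankS; lia.
move=> [Z [_ [/andP[ZX XnZ] /andP[YZ ZnY]]]]; rewrite /fle in ZX XnZ YZ ZnY.
have := ltn_leqif (mxrank_leqif_sup ZX); rewrite XnZ.
have := ltn_leqif (mxrank_leqif_sup YZ); rewrite ZnY; lia.
Qed.

Lemma rank_addsmx_step X X' Y : (X' <= X)%MS -> (\rank X <= (\rank X').+1)%N ->
  (\rank (X + Y)%MS <= (\rank (X' + Y)%MS).+1)%N.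
Proof.
move=> X'X rX; have := mxrank_sum_cap X Y; have := mxrank_sum_cap X' Y.
have := mxrankS (capmxS X'X (submx_refl Y)); lia.
Qed.

Lemma strict_subchain (P : 'M[R]_n -> Prop) (f : nat -> 'M[R]_n) k :
  (forall i, (i < k)%N ->
     (f i.+1 <= f i)%MS /\ (\rank (f i) <= (\rank (f i.+1)).+1)%N) ->
  (forall i, (i <= k)%N -> P (f i)) ->
  exists k' (g : nat -> 'M[R]_n),
    [/\ g 0%N = f 0%N, (g k' == f k)%MS,
        (forall i, (i < k')%N ->
           (g i.+1 <= g i)%MS /\ \rank (g i) = (\rank (g i.+1)).+1)
      & forall i, (i <= k')%N -> P (g i)].
Proof.
elim: k => [|k IH] fstep fP; first by exists 0%N, f; split => //; exact/eqmxP.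
have [k' [g [g0 gk gstep gP]]] :=
  IH (fun i ik => fstep i (ltnW ik)) (fun i ik => fP i (leqW ik)).
have [fk1k rfk] := fstep k (ltnSn k).
have [rk_eq | rk_ne] := eqVneq (\rank (f k)) (\rank (f k.+1)).
  exists k', g; split => //; apply/eqmxP; apply: eqmx_trans (eqmxP gk) _.
  by apply/eqmx_sym/eqmxP; rewrite -(geq_leqif (mxrank_leqif_eq fk1k)) rk_eq.
have rgk : \rank (g k') = \rank (f k) by apply/eqmx_rank.
exists k'.+1, (fun i => if i == k'.+1 then f k.+1 else g i); split.
- exact: g0.
- by rewrite eqxx; apply/eqmxP.
- move=> i; rewrite ltnS leq_eqVlt => /orP[/eqP -> | ik'].
    rewrite eqxx (ltn_eqF (ltnSn k')); split; last by have := mxrankS fk1k; lia.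
    by case/andP: gk => _; apply: submx_trans fk1k.
  by rewrite eqSS (ltn_eqF ik') (ltn_eqF (leqW ik')); apply: gstep.
- move=> i; case: eqP => [-> _ | /eqP ik']; first exact: fP.
  by rewrite leq_eqVlt (negbTE ik'); apply: gP.
Qed.

(* Localization.  A' is a subarrangement of A closed under taking every normal
   of A that vanishes on its flat Y0; its flats are the flats of A above Y0. *)
Section Localization.
Variables A A' : seq vec.
Hypothesis sub_A' : {subset A' <= A}.
Hypothesis closed_A' : forall a, a \in A -> flatmx A' *m a^T = 0 -> a \in A'.
Local Notation Y0 := (flatmx A').

Lemma flat_local_base : is_flat A Y0.
Proof. by exists A'; split => //; apply/eqmxP. Qed.

Lemma flat_local_above T : is_flat A' T -> (Y0 <= T)%MS.
Proof.
by move=> [t [tA /andP[_ tT]]]; apply: submx_trans tT; apply: flatmx_subset.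
Qed.

Lemma flat_local_sub T : is_flat A' T -> is_flat A T.
Proof. by move=> [t [tA Tt]]; exists t; split => // a /tA /sub_A'. Qed.

Lemma flat_local Z : is_flat A Z -> (Y0 <= Z)%MS -> is_flat A' Z.
Proof.
move=> [s [sA Zs]] YZ; exists s; split => // a aS.
apply: closed_A' (sA _ aS) _; case/andP: Zs => Zs _.
exact: vanish_sub (submx_trans YZ Zs) (flatmx_vanish aS).
Qed.

Lemma modular_local X : modular A X -> modular A' (X + Y0)%MS.
Proof.
move=> Xmod; apply: sum_modular => [|T fT].
  exact: flat_local (modular_sum Xmod flat_local_base) (addsmxSr _ _).
have Y0T := flat_local_above fT.
have XT : ((X + T)%MS == (X + Y0 + T)%MS)%MS.
  rewrite !addsmx_sub !addsmxSr addsmxSl /= andbT.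
  rewrite (submx_trans (addsmxSl X Y0)) ?addsmxSl //=.
  by rewrite (submx_trans Y0T) ?addsmxSr.
apply: is_flat_eq XT; apply: flat_local.
  exact: modular_sum Xmod (flat_local_sub fT).
exact: submx_trans Y0T (addsmxSr _ _).
Qed.

(* Supersolvability passes to the localization: push the modular chain of A
   up by Y0 and remove repetitions. *)
Lemma supersolvable_local : supersolvable A -> supersolvable A'.
Proof.
move=> [k [X [X0 Xk Xcov Xmod]]].
have [i ik|i ik|k' [g [g0 gk gstep gmod]]] :=
  @strict_subchain (modular A') (fun i => X i + Y0)%MS k.
- have [/andP[XX _] _] := Xcov i ik; split; first exact: addsmxS.
  apply: rank_addsmx_step => //.
  by rewrite (cover_rank (Xmod i (ltnW ik)).1 (Xmod i.+1 ik).1 (Xcov i ik)).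
- exact/modular_local/Xmod.
exists k', g; split => //.
- rewrite g0 addsmx_sub; case/andP: X0 => -> X0'.
  rewrite (submx_trans X0') ?addsmxSl // andbT.
  by apply/sub_flatmxP => a; rewrite in_nil.
- apply/eqmxP; apply: eqmx_trans (eqmxP gk) _; apply/eqmxP.
  rewrite addsmx_sub submx_refl addsmxSr !andbT.
  by case/andP: Xk => XkA _; apply: submx_trans XkA (flatmx_subset sub_A').
- by move=> i ik; have [gg rg] := gstep i ik; apply: rank_step_covers.
Qed.

End Localization.

(* The normals of A lying in U form a localization of A. *)
Lemma supersolvable_restrict A A' (U : 'M[R]_n) :
  A' =i [seq a <- A | (a <= U)%MS] -> supersolvable A -> supersolvable A'.
Proof.
move=> A'E; apply: supersolvable_local => [a|a aA Y0a].
  by rewrite A'E mem_filter => /andP[].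
rewrite A'E mem_filter aA andbT; apply: submx_trans (flatmx_annihilator Y0a) _.
apply/row_subP => i; rewrite rowK.
by have := mem_nth 0 (ltn_ord i); rewrite A'E mem_filter => /andP[].
Qed.

End Flats.

Theorem mainTheorem14 (R : realFieldType) (n : nat) (Phi : seq 'rV[R]_n)
    (c : 'rV[R]_n) (w U u : 'M[R]_n) :
  root_system Phi -> regular Phi c -> in_weyl Phi w ->
  supersolvable (inv_set Phi c w) ->
  (* u = fl_U(w): u in W_U, with inversion set (wrt R^+ cap U) = I(w) cap U *)
  in_weyl (restr Phi U) u ->
  inv_set (restr Phi U) c u =i [seq a <- inv_set Phi c w | (a <= U)%MS] ->
  supersolvable (inv_set (restr Phi U) c u).
Proof.
move=> _ _ _ ss_w _ inv_u.
exact: supersolvable_restrict inv_u ss_w.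
Qed.
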